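(* Let $\mathcal{X},\mathcal{Y},\mathcal{Z}$ be sets, let $\mathcal{G}$ be a measurable space of maps $g:\mathcal{X}\to\mathcal{Z}$ (representations), let $\mathcal{H}$ be a set of maps $h:\mathcal{Z}\to\mathbb{R}$, and let $\ell$ be a real-valued loss function. Fix $T$ tasks with arbitrary datasets $\mathcal{S}_t=((x_{t,1},y_{t,1}),\dots,(x_{t,m_t},y_{t,m_t}))$, $t=1,\dots,T$, and run the EWA-LL algorithm (described in the context) with a prior $\pi_1$ on $\mathcal{G}$ and a parameter $\eta>0$. Assume that for every $t$ and every $g\in\mathcal{G}$, $\hat{L}_t(g)\in[0,C]$ and the within-task algorithm satisfies $\mathcal{R}_t(g)\le \beta(g,m_t)$. Then $$\frac{1}{T}\sum_{t=1}^T \mathbb{E}_{\hat g_t\sim\pi_t}\Big[\frac{1}{m_t}\sum_{i=1}^{m_t}\hat\ell_{t,i}\Big]\le \inf_{\rho}\Bigg\{\mathbb{E}_{g\sim\rho}\Bigg[\frac{1}{T}\sum_{t=1}^T\inf_{h_t\in\mathcal{H}}\frac{1}{m_t}\sum_{i=1}^{m_t}\ell\big(h_t\circ g(x_{t,i}),y_{t,i}\big)+\frac{1}{T}\sum_{t=1}^T\beta(g,m_t)\Bigg]+\frac{\eta C^2}{8}+\frac{\mathcal{K}(\rho,\pi_1)}{\eta T}\Bigg\},$$ where the infimum is over all probability measures $\rho$ on $\mathcal{G}$ and $\mathcal{K}(\rho,\pi_1)$ is the Kullback–Leibler divergence between $\rho$ and $\pi_1$.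
   Context: Within-task algorithm: for each task $t$ and each representation $g\in\mathcal{G}$, an online algorithm processes the points of $\mathcal{S}_t$ sequentially: at step $i$ it sees $x_{t,i}$, outputs a prediction $\hat y^g_{t,i}$ (depending only on $g$, $x_{t,1},\dots,x_{t,i}$, $y_{t,1},\dots,y_{t,i-1}$), then $y_{t,i}$ is revealed. Its average loss is $\hat{L}_t(g)=\frac{1}{m_t}\sum_{i=1}^{m_t}\ell(\hat y^g_{t,i},y_{t,i})$ (assumed measurable in $g$), and its within-task regret is $\mathcal{R}_t(g)=\hat{L}_t(g)-\inf_{h\in\mathcal{H}}\frac{1}{m_t}\sum_{i=1}^{m_t}\ell(h\circ g(x_{t,i}),y_{t,i})$. EWA-LL: given a probability measure $\pi_1$ on $\mathcal{G}$ and $\eta>0$, for $t=1,\dots,T$: (i) draw $\hat g_t\sim\pi_t$; (ii) run the within-task algorithm on $\mathcal{S}_t$ with representation $\hat g_t$, incurring losses $\hat\ell_{t,i}=\ell(\hat y^{\hat g_t}_{t,i},y_{t,i})$; (iii) set $\pi_{t+1}(\mathrm{d}g)=\exp(-\eta\hat L_t(g))\pi_t(\mathrm{d}g)/\int\exp(-\eta\hat L_t(\gamma))\pi_t(\mathrm{d}\gamma)$. The expectation $\mathbb{E}_{\hat g_t\sim\pi_t}$ is over the random draw of $\hat g_t$ at step (i). *)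

From HB Require Import structures.
From mathcomp Require Import all_boot all_order all_algebra.
From mathcomp Require Import all_classical all_reals all_analysis.
Set Implicit Arguments. Unset Strict Implicit. Unset Printing Implicit Defensive.
Import Order.TTheory GRing.Theory Num.Theory.
Local Open Scope classical_set_scope.
Local Open Scope ring_scope.
Local Open Scope charge_scope.

Definition KL d (T : measurableType d) (R : realType)
  (rho mu : probability T R) : \bar R :=
  if pselect (rho `<< mu) then
    (\int[rho]_x (ln (fine ('d (charge_of_finite_measure rho) '/d mu x)))%:E)%E
  else +oo%E.

(* Data of task t (0-based, t = 0, ..., T-1): examples (x t i, y t i),
   i = 0, ..., m t - 1.  Representations are elements g of the measurable
   space G, acting as maps X -> Z through [rep]. *)

Definition yhat (R : realType) (G X Y : Type) (alg : G -> seq (X * Y) -> X -> R)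
  (x : nat -> nat -> X) (y : nat -> nat -> Y) (t i : nat) (g : G) : R :=
  alg g [seq (x t j, y t j) | j <- iota 0 i] (x t i).

Definition Lhat (R : realType) (G X Y : Type) (alg : G -> seq (X * Y) -> X -> R)
  (ell : R -> Y -> R) (m : nat -> nat)
  (x : nat -> nat -> X) (y : nat -> nat -> Y) (t : nat) (g : G) : R :=
  (m t)%:R^-1 * \sum_(i < m t) ell (yhat alg x y t i g) (y t i).

Definition best_loss (R : realType) (G X Y Z : Type) (rep : G -> X -> Z)
  (H : set (Z -> R)) (ell : R -> Y -> R) (m : nat -> nat)
  (x : nat -> nat -> X) (y : nat -> nat -> Y) (t : nat) (g : G) : \bar R :=
  ereal_inf [set ((m t)%:R^-1 * \sum_(i < m t) ell (h (rep g (x t i))) (y t i))%:E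
            | h in H].

Definition regret (R : realType) (G X Y Z : Type) (rep : G -> X -> Z)
  (H : set (Z -> R)) (alg : G -> seq (X * Y) -> X -> R)
  (ell : R -> Y -> R) (m : nat -> nat)
  (x : nat -> nat -> X) (y : nat -> nat -> Y) (t : nat) (g : G) : \bar R :=
  ((Lhat alg ell m x y t g)%:E - best_loss rep H ell m x y t g)%E.

From HB Require Import structures.
From mathcomp Require Import all_boot all_order all_algebra.
From mathcomp Require Import all_classical all_reals all_analysis.
From mathcomp Require Import ring lra measurable_realfun.

Set Implicit Arguments.
Unset Strict Implicit.
Unset Printing Implicit Defensive.

Import Order.TTheory GRing.Theory Num.Theory.
Local Open Scope classical_set_scope.
Local Open Scope ring_scope.

(* Write Z_t for the normalising constant of the update at task t and
   S(g) = sum_t L_t(g) for the cumulative loss.  Unrolling the update with the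
   change-of-variables formula shows that pi_T has density
   w = exp(-eta S - sum_t ln Z_t) with respect to pi_0.  Hoeffding's lemma gives
   ln Z_t <= -eta E_{pi_t}[L_t] + eta^2 C^2 / 8, and the Gibbs inequality
   E_rho[ln w] <= KL(rho, pi_0), valid for every density w of total mass at
   most one, gives -eta E_rho[S] - sum_t ln Z_t <= KL(rho, pi_0).  Adding the
   two and dividing by eta T is the exponential-weights bound; the within-task
   regret bound then replaces L_t(g) by the best in-class loss plus beta(g, m_t). *)

Section bernoulli_mgf.
Variables (R : realType) (p : R).
Hypotheses (p_ge0 : 0 <= p) (p_le1 : p <= 1).

Let mgf (v : R) := 1 - p + p * expR v.

Let mgf_gt0 v : 0 < mgf v.
Proof.
rewrite /mgf; have e_gt0 := expR_gt0 v.
have [e_le1|e_gt1] := lerP (expR v) 1.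
- have : 0 <= (1 - p) * (1 - expR v) by rewrite mulr_ge0 // subr_ge0.
  nra.
- have : 0 <= p * (expR v - 1) by rewrite mulr_ge0 // subr_ge0 ltW.
  lra.
Qed.

Let mgf_derive (v : R) : is_derive v (1 : R) mgf (p * expR v).
Proof. by rewrite /mgf; apply: is_derive_eq; rewrite add0r mul1r. Qed.

Let slope (v : R) := p * expR v / mgf v - v / 4.

Let slope_derive (v : R) :
  is_derive v (1 : R) slope (p * expR v * (1 - p) / mgf v ^+ 2 - 1 / 4).
Proof.
have mgf_neq0 := lt0r_neq0 (mgf_gt0 v).
rewrite /slope; apply: is_derive_eq.
by rewrite /GRing.scale /= /mgf in mgf_neq0 *; field.
Qed.

Let slope_ge (v : R) : v <= 0 -> p <= slope v.
Proof.
have slope0 : slope 0 = p.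
  by rewrite /slope /mgf expR0 mulr1 mul0r subr0 subrK divr1.
move=> v_le0; rewrite -[X in X <= _]slope0.
apply: (@ler0_derive1_nincrNy _ slope 0) => //.
- by move=> w _; case: (slope_derive w).
- move=> w _; rewrite derive1E; case: (slope_derive w) => _ ->.
  have mgf2_gt0 : 0 < mgf w ^+ 2 by rewrite exprn_gt0.
  rewrite subr_le0 ler_pdivrMr // /mgf.
  (* 4ab <= (a + b)^2 for a = 1 - p and b = p e^w *)
  have := sqr_ge0 (1 - p - p * expR w); nra.
- by apply: derivable_within_continuous => w _; case: (slope_derive w).
Qed.

Lemma bernoulli_mgf_le (u : R) :
  u <= 0 -> 1 - p + p * expR u <= expR (p * u + u ^+ 2 / 8).
Proof.
move=> u_le0.
pose gap v := ln (mgf v) - p * v - v ^+ 2 / 8.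
have gap_derive v : is_derive v (1 : R) gap (slope v - p).
  have ln_mgf := is_derive1_comp (is_derive1_ln (mgf_gt0 v)) (mgf_derive v).
  rewrite (_ : gap = (@ln R \o mgf) - (fun v => p * v) - (fun v => v ^+ 2 / 8)) //.
  apply: is_derive_eq; rewrite /GRing.scale /= /slope.
  by field; rewrite lt0r_neq0.
have gap_le : gap u <= gap 0.
  apply: (@ger0_derive1_ndecrNy _ gap 0) => //.
  - move=> w; rewrite in_itv /= => w_lt0; rewrite derive1E; case: (gap_derive w) => _ ->.
    by rewrite subr_ge0 slope_ge // ltW.
  - by apply: derivable_within_continuous => w _; case: (gap_derive w).
have gap0 : gap 0 = 0.
  by rewrite /gap /mgf expR0 mulr1 subrK ln1 mulr0 expr0n /= mul0r !subr0.
rewrite -[leLHS]lnK ?ler_expR ?posrE ?mgf_gt0 //.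
by move: gap_le; rewrite gap0 /gap; lra.
Qed.

End bernoulli_mgf.

Lemma expR_le_chord (R : realType) (s x C : R) : 0 < C -> 0 <= x <= C ->
  expR (s * x) <= 1 - x / C + x / C * expR (s * C).
Proof.
move=> C_gt0 /andP[x_ge0 x_leC].
have t_ge0 : 0 <= x / C by rewrite divr_ge0 // ltW.
have t_le1 : x / C <= 1 by rewrite ler_pdivrMr // mul1r.
have := convex_expR (Itv01 t_ge0 t_le1) (s * C) 0.
rewrite !convRE /= expR0 mulr0 addr0 mulr1.
have -> : x / C * (s * C) = s * x by field; rewrite lt0r_neq0.
by rewrite addrC.
Qed.

Lemma bounded_integrable d (T : measurableType d) (R : realType)
    (mu : {finite_measure set T -> \bar R}) (f : T -> R) (M : R) :
  measurable_fun setT f -> (forall x, `|f x| <= M) -> mu.-integrable setT (EFin \o f).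
Proof.
move=> mf f_le; apply: measurable_bounded_integrable => //.
- by rewrite ltey_eq fin_num_measure.
- exists M; split; first exact: num_real.
  by move=> N M_lt_N x _ /=; rewrite (le_trans (f_le x)) // ltW.
Qed.

Section hoeffding.
Context d (T : measurableType d) (R : realType) (P : probability T R).
Variables (X : T -> R) (C : R).
Hypotheses (mX : measurable_fun setT X) (X_bnd : forall x, 0 <= X x <= C).
Local Open Scope ereal_scope.

Let X_ge0 x : (0 <= X x)%R. Proof. by have /andP[] := X_bnd x. Qed.

Let X_leC x : (X x <= C)%R. Proof. by have /andP[] := X_bnd x. Qed.

Let mean := fine (\int[P]_x (X x)%:E).

Let integrable_X : P.-integrable setT (EFin \o X).
Proof. by apply: (@bounded_integrable _ _ _ P _ C mX) => x; rewrite ger0_norm. Qed.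

Let integral_X : \int[P]_x (X x)%:E = mean%:E.
Proof. by rewrite fineK // (integrable_fin_num measurableT integrable_X). Qed.

Let mean_ge0 : (0 <= mean)%R.
Proof. by rewrite -lee_fin -integral_X integral_ge0 // => x _; rewrite lee_fin. Qed.

Let mean_leC : (mean <= C)%R.
Proof.
rewrite -lee_fin -integral_X (@le_trans _ _ (\int[P]_x C%:E)) //.
  by apply: ge0_le_integral => // [x _||x _]; rewrite ?lee_fin //; exact/measurable_EFinP.
by rewrite integral_cst //= probability_setT mule1.
Qed.

Let integral_expR_le_chord (s : R) : (0 < C)%R ->
  \int[P]_x (expR (s * X x))%:E <= (1 - mean / C + mean / C * expR (s * C))%:E.
Proof.
move=> C_gt0; pose a := ((expR (s * C) - 1) / C)%R.
have -> : (1 - mean / C + mean / C * expR (s * C) = 1 + a * mean)%R.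
  by rewrite /a; field; rewrite lt0r_neq0.
apply: (@le_trans _ _ (\int[P]_x (1 + a * X x)%:E)).
  apply: ge0_le_integral => // [||x _].
  - by apply/measurable_EFinP/measurableT_comp => //; exact: measurable_funM.
  - by apply/measurable_EFinP/measurable_funD => //; exact: measurable_funM.
  - have -> : (1 + a * X x = 1 - X x / C + X x / C * expR (s * C))%R.
      by rewrite /a; field; rewrite lt0r_neq0.
    by rewrite lee_fin expR_le_chord.
under eq_integral do rewrite EFinD EFinM.
rewrite integralD //; last 2 first.
- exact: finite_measure_integrable_cst.
- exact: integrableZl.
by rewrite integral_cst //= probability_setT mule1 integralZl // integral_X.
Qed.

Lemma hoeffding_lemma (s : R) : (s <= 0)%R ->
  \int[P]_x (expR (s * X x))%:E <=
  (expR (s * fine (\int[P]_x (X x)%:E) + s ^+ 2 * C ^+ 2 / 8))%:E.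
Proof.
move=> s_le0; rewrite -/mean.
have [C_le0|C_gt0] := lerP C 0.
  have X0 x : X x = 0%R by apply/eqP; rewrite eq_le X_ge0 (le_trans (X_leC x) C_le0).
  have -> : mean = 0%R by apply/eqP; rewrite eq_le mean_ge0 (le_trans mean_leC C_le0).
  under eq_integral do rewrite X0 mulr0 expR0.
  rewrite integral_cst //= probability_setT mule1 mulr0 add0r lee_fin.
  by rewrite -expR0 ler_expR divr_ge0 // mulr_ge0 // sqr_ge0.
apply: le_trans (integral_expR_le_chord s C_gt0) _; rewrite lee_fin.
have p_ge0 : (0 <= mean / C)%R by rewrite divr_ge0 // ltW.
have p_le1 : (mean / C <= 1)%R by rewrite ler_pdivrMr // mul1r.
have sC_le0 : (s * C <= 0)%R by rewrite mulr_le0_ge0 // ltW.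
apply: le_trans (bernoulli_mgf_le p_ge0 p_le1 sC_le0) _.
rewrite ler_expR (_ : mean / C * (s * C) = s * mean)%R; last by field; rewrite lt0r_neq0.
by rewrite exprMn.
Qed.

End hoeffding.

Section integral_density.
Context d (T : measurableType d) (R : realType).
Variables (mu : {sigma_finite_measure set T -> \bar R}) (nu : {finite_measure set T -> \bar R}).
Local Open Scope ereal_scope.

Lemma integral_density (g f : T -> \bar R) (E : set T) :
  measurable_fun setT g ->
  (forall A, measurable A -> nu A = \int[mu]_(x in A) g x) ->
  measurable E -> (forall x, 0 <= f x) -> measurable_fun E f ->
  \int[mu]_(x in E) (f x * g x) = \int[nu]_(x in E) f x.
Proof.
move=> mg nu_g mE f_ge0 mf.
have nu_mu : nu `<< mu.
  apply/null_content_dominatesP => A mA muA0.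
  by rewrite nu_g // null_set_integral //; exact: measurable_funTS.
have iRN := Radon_Nikodym_SigmaFinite.f_integrable nu_mu.
have g_ae : ae_eq mu E (Radon_Nikodym_SigmaFinite.f nu mu) g.
  apply: integral_ae_eq => //; first exact: integrableS iRN.
  - exact: measurable_funTS.
  - by move=> A _ mA; rewrite -nu_g // -Radon_Nikodym_SigmaFinite.f_integral.
rewrite -(Radon_Nikodym_SigmaFinite.change_of_variables nu_mu) //.
apply: ae_eq_integral => //.
- by apply: emeasurable_funM => //; exact: measurable_funTS.
- by apply: emeasurable_funM => //; exact/measurable_funTS/(measurable_int _ iRN).
- exact/ae_eqe_mul2l/ae_eq_sym.
Qed.

End integral_density.

Section integral_monotonicity.
Context d (T : measurableType d) (R : realType) (mu : {measure set T -> \bar R}).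
Local Open Scope ereal_scope.

Lemma integrable_le_integral (D : set T) (f g : T -> \bar R) :
  measurable D -> mu.-integrable D f -> measurable_fun D g ->
  (forall x, D x -> f x <= g x) -> \int[mu]_(x in D) f x <= \int[mu]_(x in D) g x.
Proof.
move=> mD intf mg fg; have mf := measurable_int _ intf.
rewrite integralE [leRHS]integralE leeB //.
- apply: ge0_le_integral => //; [exact: measurable_funepos|exact: measurable_funepos|].
  by move=> x Dx; apply: funepos_le (mem_set Dx) => y /[1!inE]; exact: fg.
- apply: ge0_le_integral => //; [exact: measurable_funeneg|exact: measurable_funeneg|].
  by move=> x Dx; apply: funeneg_le (mem_set Dx) => y /[1!inE]; exact: fg.
Qed.

Lemma ge0_le_integral_nonmeasurable (f g : T -> \bar R) :
  (forall x, 0 <= f x) -> (forall x, f x <= g x) -> \int[mu]_x f x <= \int[mu]_x g x.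
Proof.
move=> f_ge0 fg; have g_ge0 x := le_trans (f_ge0 x) (fg x).
rewrite !ge0_integralTE //; apply: ereal_sup_le => _ [h hf <-].
by exists h => // x; exact: le_trans (hf x) (fg x).
Qed.

End integral_monotonicity.

Local Open Scope charge_scope.

Section gibbs_inequality.
Context d (T : measurableType d) (R : realType) (mu rho : probability T R).
Hypothesis rho_mu : rho `<< mu.
Local Open Scope ereal_scope.

Let D := 'd (charge_of_finite_measure rho) '/d mu.

Let iD : mu.-integrable setT D.
Proof. exact: (@Radon_Nikodym_integrable _ _ _ (charge_of_finite_measure rho)). Qed.

Let mD : measurable_fun setT D. Proof. exact: measurable_int iD. Qed.

Let rho_D : forall A, measurable A -> rho A = \int[mu]_(x in A) D x.
Proof.
by move=> A mA; rewrite -(@Radon_Nikodym_integral _ _ _ (charge_of_finite_measure rho)).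
Qed.

Let D_pos := [set x | 0 < D x].

Let mD_pos : measurable D_pos.
Proof. by rewrite -[D_pos]setTI; exact: emeasurable_fun_o_infty. Qed.

Let rho_D_nonpos : rho (~` D_pos) = 0.
Proof.
apply/eqP; rewrite eq_le measure_ge0 andbT rho_D; last exact: measurableC.
rewrite -(integral0 mu (~` D_pos)).
apply: integrable_le_integral; first exact: measurableC.
- by apply: integrableS iD => //; exact: measurableC.
- exact: measurable_cst.
- by move=> x /= /negP; rewrite -leNgt.
Qed.

(* [expR (ln w - ln (fine D))] is [w / D] on [D_pos], a set of full [rho]-measure. *)
Let integral_ratio_le1 (w : T -> R) : measurable_fun setT w -> (forall x, 0 < w x)%R ->
  \int[mu]_x (w x)%:E <= 1 -> \int[rho]_x (expR (ln (w x) - ln (fine (D x))))%:E <= 1.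
Proof.
move=> mw w_gt0 w_le1.
pose v x := expR (ln (w x) - ln (fine (D x))).
have mv : measurable_fun setT v.
  apply: measurableT_comp => //; apply: measurable_funB; apply: measurableT_comp => //.
  exact: measurableT_comp.
have mD_neg : measurable (~` D_pos) by exact: measurableC.
have mvE : measurable_fun setT (EFin \o v) by exact/measurable_EFinP.
rewrite -(setUv D_pos) integral_setU //; last 2 first.
- by rewrite setUv.
- by rewrite disj_set2E setICr.
rewrite [X in _ + X]null_set_integral //; last exact: measurable_funTS.
rewrite adde0 -(@integral_density _ _ _ mu rho D) //; last exact: measurable_funTS.
rewrite (eq_integral (fun x => (w x)%:E)); last first.
  move=> x /[!inE] Dx.
  have Dfin : D x \is a fin_num.
    exact: (@Radon_Nikodym_fin_num _ _ _ (charge_of_finite_measure rho)).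
  have D_gt0 : (0 < fine (D x))%R by rewrite fine_gt0 // Dx ltey_eq Dfin.
  by rewrite -[D x](fineK Dfin) -EFinM /v expRB !lnK ?posrE // divfK // gt_eqF.
apply: (le_trans _ w_le1); apply: ge0_subset_integral => //; first exact/measurable_EFinP.
by move=> x _; rewrite lee_fin ltW.
Qed.

Lemma integral_ln_le_integral_ln_Radon_Nikodym (w : T -> R) (M : R) :
  measurable_fun setT w -> (forall x, 0 < w x)%R -> (forall x, `|ln (w x)| <= M)%R ->
  \int[mu]_x (w x)%:E <= 1 ->
  \int[rho]_x (ln (w x))%:E <= \int[rho]_x (ln (fine (D x)))%:E.
Proof.
move=> mw w_gt0 lnw_le w_le1.
pose v x := expR (ln (w x) - ln (fine (D x))).
have mlnw : measurable_fun setT (fun x => ln (w x)) by exact: measurableT_comp.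
have mlnD : measurable_fun setT (fun x => ln (fine (D x))).
  by apply: measurableT_comp => //; exact: measurableT_comp.
have v_le1 : \int[rho]_x (v x)%:E <= 1 := integral_ratio_le1 mw w_gt0 w_le1.
have iv : rho.-integrable setT (EFin \o v).
  apply/integrableP; split.
    by apply/measurable_EFinP/measurableT_comp => //; exact: measurable_funB.
  under eq_integral do rewrite /= ger0_norm ?expR_ge0 //.
  by rewrite (le_lt_trans v_le1) // ltry.
have ilnw : rho.-integrable setT (EFin \o (fun x => ln (w x))).
  exact: (@bounded_integrable _ _ _ rho _ M).
have i1v : rho.-integrable setT (EFin \o (fun x => 1 - v x)%R).
  rewrite (_ : EFin \o _ = (EFin \o cst 1%R) \- (EFin \o v)) //.
  by apply: integrableB => //; exact: finite_measure_integrable_cst.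
apply: (@le_trans _ _ (\int[rho]_x (ln (w x) + (1 - v x))%:E)).
  under [leRHS]eq_integral do rewrite EFinD.
  rewrite integralD // leeDl //.
  rewrite integralB_EFin //; last exact: finite_measure_integrable_cst.
  rewrite integral_cst //= probability_setT mule1 sube_ge0 ?orbT //; exact: v_le1.
apply: integrable_le_integral => //.
- rewrite (_ : (fun x => _) = (EFin \o (fun x => ln (w x))) \+ (EFin \o (fun x => 1 - v x)%R)) //.
  exact: integrableD.
- exact/measurable_EFinP.
- move=> x _; rewrite lee_fin.
  have := expR_ge1Dx (ln (w x) - ln (fine (D x))); rewrite -/(v x); lra.
Qed.

End gibbs_inequality.

Lemma integral_ln_le_KL d (T : measurableType d) (R : realType) (mu rho : probability T R)
    (w : T -> R) (M : R) :
  measurable_fun setT w -> (forall x, 0 < w x) -> (forall x, `|ln (w x)| <= M) ->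
  (\int[mu]_x (w x)%:E <= 1)%E -> (\int[rho]_x (ln (w x))%:E <= KL rho mu)%E.
Proof.
move=> mw w_gt0 lnw_le w_le1; rewrite /KL; case: pselect => [rho_mu|_] /=; last exact: leey.
exact: (integral_ln_le_integral_ln_Radon_Nikodym rho_mu mw w_gt0 lnw_le w_le1).
Qed.

Local Close Scope charge_scope.

Section exponential_weights.
Context d (G : measurableType d) (R : realType).
Variables (L : nat -> G -> R) (T : nat) (C eta : R) (pi : nat -> probability G R).
Hypothesis eta_gt0 : 0 < eta.
Hypothesis mL : forall t, (t < T)%N -> measurable_fun setT (L t).
Hypothesis L_bnd : forall t g, (t < T)%N -> 0 <= L t g <= C.
Hypothesis pi_update : forall t A, (t < T)%N -> measurable A ->
  pi t.+1 A = (\int[pi t]_(g in A) (expR (- eta * L t g))%:E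
               * ((fine (\int[pi t]_g (expR (- eta * L t g))%:E))^-1)%:E)%E.

Let L_ge0 t g : (t < T)%N -> 0 <= L t g.
Proof. by move=> tT; have /andP[] := L_bnd g tT. Qed.

Let L_leC t g : (t < T)%N -> L t g <= C.
Proof. by move=> tT; have /andP[] := L_bnd g tT. Qed.

Let weight t g := expR (- eta * L t g).

Let partition t := fine (\int[pi t]_g (weight t g)%:E).

Let mweight t : (t < T)%N -> measurable_fun setT (weight t).
Proof. by move=> tT; apply: measurableT_comp => //; apply: measurable_funM => //; exact: mL. Qed.

Let weight_le1 t g : (t < T)%N -> weight t g <= 1.
Proof.
by move=> tT; rewrite expR_le1 mulNr oppr_le0 mulr_ge0 ?L_ge0 // ltW.
Qed.

Let integrable_weight t : (t < T)%N -> (pi t).-integrable setT (EFin \o weight t).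
Proof.
move=> tT; apply: (@bounded_integrable _ _ _ (pi t) _ 1 (mweight tT)) => g.
by rewrite ger0_norm ?expR_ge0 ?weight_le1.
Qed.

Let integral_weight t : (t < T)%N -> (\int[pi t]_g (weight t g)%:E = (partition t)%:E)%E.
Proof.
by move=> tT; rewrite fineK // (integrable_fin_num measurableT (integrable_weight tT)).
Qed.

Let partition_gt0 t : (t < T)%N -> 0 < partition t.
Proof.
move=> tT; rewrite -lte_fin -integral_weight //.
have cst_gt0 : (0 < \int[pi t]_g (expR (- eta * C))%:E)%E.
  by rewrite integral_cst //= probability_setT mule1 lte_fin expR_gt0.
apply: (lt_le_trans cst_gt0).
apply: ge0_le_integral => //; first exact/measurable_EFinP/mweight.
by move=> g _; rewrite lee_fin ler_expR !mulNr lerN2 ler_pM2l ?L_leC.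
Qed.

Let ln_partition_le t : (t < T)%N ->
  ln (partition t) <= - eta * fine (\int[pi t]_g (L t g)%:E) + eta ^+ 2 * C ^+ 2 / 8.
Proof.
move=> tT; rewrite -ler_expR lnK ?posrE ?partition_gt0 // -lee_fin -integral_weight //.
have := @hoeffding_lemma _ _ _ (pi t) (L t) C (mL tT) (fun g => L_bnd g tT) (- eta).
by rewrite sqrrN oppr_le0 ltW //; apply.
Qed.

Let posterior k g := expR (- eta * \sum_(t < k) L t g - \sum_(t < k) ln (partition t)).

Let posterior_next k g : (k < T)%N ->
  posterior k.+1 g = weight k g / partition k * posterior k g.
Proof.
move=> kT; rewrite /posterior !big_ord_recr /= mulrDr opprD addrACA expRD mulrC.
by rewrite expRD expRN lnK // posrE partition_gt0.
Qed.

Let mcumloss k : (k <= T)%N -> measurable_fun setT (fun g => \sum_(t < k) L t g).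
Proof. by move=> kT; apply: measurable_sum => t; apply: mL; exact: leq_trans (ltn_ord t) kT. Qed.

Let mposterior k : (k <= T)%N -> measurable_fun setT (posterior k).
Proof.
move=> kT; apply: measurableT_comp => //; apply: measurable_funB => //.
by apply: measurable_funM => //; exact: mcumloss.
Qed.

Let pi_posterior k : (k <= T)%N -> forall A, measurable A ->
  pi k A = (\int[pi 0]_(g in A) (posterior k g)%:E)%E.
Proof.
elim: k => [_ A mA|k IH kT A mA].
  under eq_integral do rewrite /posterior !big_ord0 mulr0 subr0 expR0.
  by rewrite integral_cst //= mul1e.
rewrite pi_update // -integralZr //; last exact: integrableS (integrable_weight kT).
under eq_integral do rewrite -EFinM.
rewrite -(@integral_density _ _ _ (pi 0) (pi k) (EFin \o posterior k)) //; last 4 first.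
- exact/measurable_EFinP/mposterior/ltnW.
- by apply: IH; exact: ltnW.
- by move=> g; rewrite lee_fin mulr_ge0 ?expR_ge0 // invr_ge0 ltW // partition_gt0.
- by apply/measurable_funTS/measurable_EFinP/measurable_funM => //; exact: mweight.
apply: eq_integral => g _ /=.
by rewrite -EFinM posterior_next.
Qed.

Let sum_ln_partition_le : \sum_(t < T) ln (partition t) <=
  - eta * \sum_(t < T) fine (\int[pi t]_g (L t g)%:E) + T%:R * (eta ^+ 2 * C ^+ 2 / 8).
Proof.
apply: le_trans (ler_sum _ (fun t _ => ln_partition_le (ltn_ord t))) _.
by rewrite big_split /= -mulr_sumr sumr_const card_ord mulr_natl.
Qed.

Let cumloss_bnd g : 0 <= \sum_(t < T) L t g <= T%:R * C.
Proof.
rewrite sumr_ge0 //=; last by move=> t _; exact: L_ge0.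
apply: le_trans (ler_sum _ (fun t _ => L_leC g (ltn_ord t))) _.
by rewrite sumr_const card_ord mulr_natl.
Qed.

Let integral_loss t : (t < T)%N ->
  (\int[pi t]_g (L t g)%:E = (fine (\int[pi t]_g (L t g)%:E))%:E)%E.
Proof.
move=> tT; rewrite fineK // (integrable_fin_num measurableT) //.
apply: (@bounded_integrable _ _ _ (pi t) _ C (mL tT)) => g.
by rewrite ger0_norm ?L_ge0 ?L_leC.
Qed.

Let integrable_cumloss (rho : probability G R) :
  rho.-integrable setT (EFin \o fun g => \sum_(t < T) L t g).
Proof.
apply: (@bounded_integrable _ _ _ rho _ (T%:R * C) (mcumloss (leqnn T))) => g.
by have /andP[S_ge0 S_le] := cumloss_bnd g; rewrite ger0_norm.
Qed.

Let integral_cumloss (rho : probability G R) :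
  (\int[rho]_g (\sum_(t < T) L t g)%:E = (fine (\int[rho]_g (\sum_(t < T) L t g)%:E))%:E)%E.
Proof. by rewrite fineK // (integrable_fin_num measurableT (integrable_cumloss rho)). Qed.

Let ln_posterior_le_KL (rho : probability G R) :
  ((- eta)%:E * \int[rho]_g (\sum_(t < T) L t g)%:E - (\sum_(t < T) ln (partition t))%:E
   <= KL rho (pi 0))%E.
Proof.
set c := \sum_(t < T) ln (partition t).
apply: le_trans
  (@integral_ln_le_KL _ _ _ (pi 0) rho (posterior T) (eta * (T%:R * C) + `|c|) _ _ _ _).
- rewrite /posterior; under [leRHS]eq_integral do rewrite expRK EFinB.
  rewrite integralB_EFin //; last 2 first.
  + under [X in _.-integrable _ X]eq_fun do rewrite EFinM.
    exact: integrableZl (integrable_cumloss rho).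
  + exact: finite_measure_integrable_cst.
  under eq_integral do rewrite EFinM.
  rewrite integralZl //; last exact: integrable_cumloss rho.
  by rewrite -/c integral_cst //= probability_setT mule1.
- exact: mposterior (leqnn T).
- by move=> g; exact: expR_gt0.
- move=> g; rewrite /posterior expRK -/c.
  have /andP[S_ge0 S_le] := cumloss_bnd g.
  apply: le_trans (ler_normB _ _) _.
  by rewrite lerD2r mulNr normrN normrM gtr0_norm // ger0_norm // ler_pM2l.
- by rewrite -pi_posterior // probability_setT.
Qed.

Lemma exponential_weights_bound (rho : probability G R) :
  ((T%:R^-1)%:E * (\sum_(t < T) \int[pi t]_g (L t g)%:E)
   <= \int[rho]_g (T%:R^-1 * \sum_(t < T) L t g)%:E + (eta * C ^+ 2 / 8)%:E
      + KL rho (pi 0) * ((eta * T%:R)^-1)%:E)%E.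
Proof.
have [T0|T_gt0] := posnP T.
  rewrite T0 big_ord0 mule0 mulr0 invr0 mule0 adde0.
  under eq_integral do rewrite big_ord0 mulr0.
  by rewrite integral0 add0e lee_fin divr_ge0 // mulr_ge0 ?sqr_ge0 // ltW.
have meanE : (\sum_(t < T) \int[pi t]_g (L t g)%:E
              = (\sum_(t < T) fine (\int[pi t]_g (L t g)%:E))%:E)%E.
  by rewrite -sumEFin; apply: eq_bigr => t _; exact: integral_loss.
have cumE : (\int[rho]_g (T%:R^-1 * \sum_(t < T) L t g)%:E
             = (T%:R^-1 * fine (\int[rho]_g (\sum_(t < T) L t g)%:E))%:E)%E.
  under eq_integral do rewrite EFinM.
  rewrite integralZl //; last exact: integrable_cumloss rho.
  by rewrite [RHS]EFinM -(integral_cumloss rho).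
have KL_ge := ln_posterior_le_KL rho; rewrite (integral_cumloss rho) in KL_ge.
have K_ge0 : 0 <= (eta * T%:R)^-1 by rewrite invr_ge0 mulr_ge0 // ltW.
rewrite cumE meanE.
apply: le_trans (leeD (lexx _) (lee_wpmul2r (K_ge0 : (0 <= _%:E)%E) KL_ge)).
rewrite -!EFinM -!EFinD lee_fin.
set mean := \sum_(t < T) _; set cum := fine _; set lnZ := \sum_(t < T) _.
have T_neq0 : T%:R != 0 :> R by rewrite pnatr_eq0 -lt0n.
have lnZ_le : lnZ / (eta * T%:R)
    <= (- eta * mean + T%:R * (eta ^+ 2 * C ^+ 2 / 8)) / (eta * T%:R).
  by rewrite /lnZ /mean ler_wpM2r // sum_ln_partition_le.
have -> : (- eta * cum - lnZ) / (eta * T%:R) = - (T%:R^-1 * cum) - lnZ / (eta * T%:R).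
  by field; rewrite T_neq0 lt0r_neq0.
have : (- eta * mean + T%:R * (eta ^+ 2 * C ^+ 2 / 8)) / (eta * T%:R)
       = - (T%:R^-1 * mean) + eta * C ^+ 2 / 8.
  by field; rewrite T_neq0 lt0r_neq0.
lra.
Qed.

End exponential_weights.

Theorem theorem1 (R : realType) (X Y Z : Type) (d : measure_display)
  (G : measurableType d) (rep : G -> X -> Z) (H : set (Z -> R))
  (ell : R -> Y -> R) (T : nat) (m : nat -> nat)
  (x : nat -> nat -> X) (y : nat -> nat -> Y)
  (alg : G -> seq (X * Y) -> X -> R) (beta : G -> nat -> R) (C eta : R)
  (pi : nat -> probability G R) :
  0 < eta ->
  (forall t, (t < T)%N -> measurable_fun setT (Lhat alg ell m x y t)) ->
  (forall t g, (t < T)%N -> 0 <= Lhat alg ell m x y t g <= C) ->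
  (forall t g, (t < T)%N ->
     (regret rep H alg ell m x y t g <= (beta g (m t))%:E)%E) ->
  (forall t A, (t < T)%N -> measurable A ->
     pi t.+1 A =
       (\int[pi t]_(g in A) (expR (- eta * Lhat alg ell m x y t g))%:E
        * ((fine (\int[pi t]_g (expR (- eta * Lhat alg ell m x y t g))%:E))^-1)%:E)%E) ->
  ((T%:R^-1)%:E * (\sum_(t < T) \int[pi t]_g (Lhat alg ell m x y t g)%:E)
   <= ereal_inf (range (fun rho : probability G R =>
        \int[rho]_g ((T%:R^-1)%:E * (\sum_(t < T) best_loss rep H ell m x y t g)
                     + (T%:R^-1 * \sum_(t < T) beta g (m t))%:E)
        + (eta * C ^+ 2 / 8)%:E
        + KL rho (pi 0%N) * ((eta * T%:R)^-1)%:E)))%E.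
Proof.
move=> eta_gt0 mL L_bnd regret_le pi_update.
set L := Lhat alg ell m x y.
have best_loss_ge t g : (t < T)%N ->
    ((L t g - beta g (m t))%:E <= best_loss rep H ell m x y t g)%E.
  move=> tT; move: (regret_le t g tT); rewrite /regret -/L.
  case: best_loss => [b| |] //=; last by rewrite leey.
  by rewrite -EFinB !lee_fin => ?; lra.
apply: le_ereal_inf_tmp => _ [rho _ <-].
apply: le_trans (exponential_weights_bound eta_gt0 mL L_bnd pi_update rho) _.
rewrite !leeD2r //; apply: ge0_le_integral_nonmeasurable => g.
  rewrite lee_fin mulr_ge0 ?invr_ge0 // sumr_ge0 // => t _.
  by have /andP[] := L_bnd t g (ltn_ord t).
have T_inv_ge0 : (0 <= (T%:R^-1)%:E :> \bar R)%E by rewrite lee_fin invr_ge0.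
have sum_le : ((\sum_(t < T) (L t g - beta g (m t)))%:E
               <= \sum_(t < T) best_loss rep H ell m x y t g)%E.
  by rewrite -sumEFin; apply: lee_sum => t _; exact: best_loss_ge.
apply: le_trans (leeD (lee_wpmul2l T_inv_ge0 sum_le) (lexx _)).
by rewrite -EFinM -EFinD lee_fin sumrB mulrBr subrK.
Qed.
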